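(* Let $(\Gamma,c)$ be a real Fuchsian group and $\gamma\in\Gamma$ an admissible element. Then the elliptic points of even order lying on $C_\gamma$ correspond bijectively to the elements of order two of $Z_\gamma$, where the point $z$ corresponds to $\sigma$ if $\sigma$ stabilizes $z$.
   Context: $\mathfrak{h}$ is the upper half-plane. A complex conjugation is an anti-holomorphic involution $c$ of $\mathfrak{h}$; for $\gamma\in\mathrm{PSL}_2(\mathbf{R})$, $\gamma^c=c\gamma c$. A real Fuchsian group is a pair $(\Gamma,c)$ with $\Gamma\subseteq\mathrm{PSL}_2(\mathbf{R})$ discrete, $c$ a complex conjugation, $\Gamma^c=\Gamma$, and $\mathfrak{h}^*/\Gamma$ compact, where $\mathfrak{h}^*$ is $\mathfrak{h}$ with the cusps of $\Gamma$ adjoined. $\gamma$ is admissible if $\gamma^c=\gamma^{-1}$; $C_\gamma=\{z\in\mathfrak{h}^*:\gamma z=cz\}$; $Z_\gamma=\{\sigma\in\Gamma:\sigma^c\gamma\sigma^{-1}=\gamma\}$. An elliptic point of even order is a point of $\mathfrak{h}$ whose stabilizer in $\Gamma$ is (finite cyclic) of even order. *)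

From HB Require Import structures.
From mathcomp Require Import all_boot all_order all_algebra.
From mathcomp Require Import reals complex.
From Stdlib Require List.
Set Implicit Arguments. Unset Strict Implicit. Unset Printing Implicit Defensive.
Import Order.TTheory GRing.Theory Num.Theory.
Local Open Scope ring_scope.
Local Open Scope complex_scope.

Section Fuchsian.
Variable R : realType.
Local Notation C := R[i].

Definition cabs (z : C) : R := Normc.normc z.

Definition inH (z : C) : Prop := 0 < complex.Im z.

(* Elements of PSL_2(R) are represented by matrices of SL_2(R); two matrices
   represent the same element of PSL_2(R) iff they agree up to sign. *)
Definition SL2 (A : 'M[R]_2) : Prop := \det A = 1.
Definition psl_eq (A B : 'M[R]_2) : Prop := A = B \/ A = - B.

Definition mob (A : 'M[R]_2) (z : C) : C :=
  ((A 0 0)%:C * z + (A 0 1)%:C) / ((A 1 0)%:C * z + (A 1 1)%:C).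

(* The projective real line P^1(R) = R u {oo}, oo represented by None,
   and the Moebius action on it. *)
Definition mobP (A : 'M[R]_2) (s : option R) : option R :=
  match s with
  | None => if A 1 0 == 0 then None else Some (A 0 0 / A 1 0)
  | Some x => if A 1 0 * x + A 1 1 == 0 then None
              else Some ((A 0 0 * x + A 0 1) / (A 1 0 * x + A 1 1))
  end.

(* A subgroup Gamma of PSL_2(R) is represented by its preimage Gt in SL_2(R),
   i.e. a subgroup of SL_2(R) containing -1. *)
Definition psl_subgroup (Gt : 'M[R]_2 -> Prop) : Prop :=
  [/\ forall A, Gt A -> SL2 A,
      Gt 1, Gt (-1),
      forall A B, Gt A -> Gt B -> Gt (A * B)
    & forall A, Gt A -> Gt (A^-1)].

(* Discreteness of Gamma in PSL_2(R) (topology induced from the entrywise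
   topology on SL_2(R)): every element is isolated. *)
Definition mx_close (A B : 'M[R]_2) (e : R) : Prop :=
  forall i j, `|A i j - B i j| < e.
Definition psl_discrete (Gt : 'M[R]_2 -> Prop) : Prop :=
  forall A, Gt A -> exists2 e : R, 0 < e &
    forall B, Gt B -> (mx_close B A e \/ mx_close B (- A) e) -> psl_eq B A.

Definition parabolic (Gt : 'M[R]_2 -> Prop) (A : 'M[R]_2) : Prop :=
  Gt A /\ ~ psl_eq A 1 /\ (\tr A) ^+ 2 = 4.
Definition cusp (Gt : 'M[R]_2 -> Prop) (s : option R) : Prop :=
  exists A, parabolic Gt A /\ mobP A s = s.

(* Points of h^* = h u {cusps}. *)
Inductive hpt := Inner of C | Bdry of option R.

Definition inHstar (Gt : 'M[R]_2 -> Prop) (p : hpt) : Prop :=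
  match p with Inner z => inH z | Bdry s => cusp Gt s end.

Definition act (A : 'M[R]_2) (p : hpt) : hpt :=
  match p with Inner z => Inner (mob A z) | Bdry s => Bdry (mobP A s) end.

Definition horoball (s : option R) (U : hpt -> Prop) : Prop :=
  match s with
  | None => exists2 K : R, 0 < K &
              forall w : C, K < complex.Im w -> U (Inner w)
  | Some x => exists2 r : R, 0 < r &
              forall w : C, cabs (w - (x +i* r)) < r -> U (Inner w)
  end.

Definition hstar_open (Gt : 'M[R]_2 -> Prop) (U : hpt -> Prop) : Prop :=
  [/\ forall p, U p -> inHstar Gt p,
      forall z, U (Inner z) -> exists2 e : R, 0 < e &
        forall w, cabs (w - z) < e -> inH w -> U (Inner w)
    & forall s, U (Bdry s) -> horoball s U].

Definition gamma_invariant (Gt : 'M[R]_2 -> Prop) (U : hpt -> Prop) : Prop :=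
  forall A p, Gt A -> U p -> U (act A p).

(* Compactness of the quotient h^*/Gamma: open sets of the quotient are the
   images of Gamma-invariant open subsets of h^*, so this says every cover of
   h^* by Gamma-invariant open sets has a finite subcover. *)
Definition quotient_compact (Gt : 'M[R]_2 -> Prop) : Prop :=
  forall F : (hpt -> Prop) -> Prop,
    (forall U, F U -> hstar_open Gt U /\ gamma_invariant Gt U) ->
    (forall p, inHstar Gt p -> exists2 U, F U & U p) ->
    exists s : seq (hpt -> Prop),
      (forall U, List.In U s -> F U) /\
      (forall p, inHstar Gt p -> exists2 U, List.In U s & U p).

Definition cdifferentiable (f : C -> C) (z : C) : Prop :=
  exists l : C, forall e : R, 0 < e -> exists2 d : R, 0 < d &
    forall w : C, 0 < cabs (w - z) < d ->
      cabs ((f w - f z) / (w - z) - l) < e.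

Definition complex_conjugation (c : C -> C) : Prop :=
  [/\ forall z, inH z -> inH (c z),
      forall z, inH z -> c (c z) = z
    & forall z, inH z -> cdifferentiable (fun w => (c w)^*) z].

Definition conj_stable (Gt : 'M[R]_2 -> Prop) (c : C -> C) : Prop :=
  (forall A, Gt A -> exists2 B, Gt B &
     forall z, inH z -> mob B z = c (mob A (c z))) /\
  (forall B, Gt B -> exists2 A, Gt A &
     forall z, inH z -> mob B z = c (mob A (c z))).

Definition real_fuchsian (Gt : 'M[R]_2 -> Prop) (c : C -> C) : Prop :=
  [/\ psl_subgroup Gt, psl_discrete Gt, complex_conjugation c,
      conj_stable Gt c & quotient_compact Gt].

Definition admissible (Gt : 'M[R]_2 -> Prop) (c : C -> C) (g : 'M[R]_2) :=
  Gt g /\ forall z, inH z -> c (mob g (c z)) = mob (g^-1) z.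

Definition on_Cgamma (c : C -> C) (g : 'M[R]_2) (z : C) : Prop :=
  inH z /\ mob g z = c z.

Definition inZgamma (Gt : 'M[R]_2 -> Prop) (c : C -> C) (g s : 'M[R]_2) :=
  Gt s /\ forall z, inH z -> c (mob s (c (mob g (mob (s^-1) z)))) = mob g z.

Definition order_two (s : 'M[R]_2) : Prop :=
  ~ psl_eq s 1 /\ psl_eq (s * s) 1.

(* The stabilizer of z in Gamma (a subset of PSL_2(R)) is finite of
   order n: the list l enumerates it without repetition modulo sign. *)
Definition stab_order (Gt : 'M[R]_2 -> Prop) (z : C) (n : nat) : Prop :=
  exists l : seq 'M[R]_2,
    [/\ size l = n,
        forall A, List.In A l -> Gt A /\ mob A z = z,
        forall A, Gt A -> mob A z = z -> exists2 B, List.In B l & psl_eq A B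
      & forall i j, (i < n)%N -> (j < n)%N ->
          psl_eq (nth 0 l i) (nth 0 l j) -> i = j].

Definition elliptic_even (Gt : 'M[R]_2 -> Prop) (z : C) : Prop :=
  inH z /\ exists n, stab_order Gt z n /\ ~~ odd n.

End Fuchsian.

(* An element of order two of PSL_2(R) is an elliptic involution: a matrix s
   of SL_2(R) with s^2 = -1.  It has exactly one fixed point in h, and two
   such involutions with the same fixed point agree up to sign.  Since Gamma is
   discrete, the stabilizer of z in Gamma is finite; pairing each element with
   its inverse, its order has the parity of the number of elements equal to
   their inverse, namely 1 and the involution fixing z if there is one.  So z is
   elliptic of even order iff some involution of Gamma fixes z.
   If an involution s fixes z with g z = c z, then s^c and g s g^-1 are both
   involutions fixing g z, hence equal, i.e. s lies in Z_g.  Conversely, if s in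
   Z_g fixes w, the relation s^c g s^-1 = g evaluated at w shows that c (g w) is
   fixed by s, hence equals w, i.e. w lies on C_g. *)

From HB Require Import structures.
From mathcomp Require Import all_boot all_order all_algebra.
From mathcomp Require Import reals complex.
From mathcomp Require Import ring lra.
From Stdlib Require Import Classical.
Import Order.TTheory GRing.Theory Num.Theory Num.Def.
Local Open Scope ring_scope.
Local Open Scope complex_scope.
Set Implicit Arguments. Unset Strict Implicit.

Section Matrix2.
Variable K : comNzRingType.
Implicit Types A B : 'M[K]_2.

Lemma ord2P (i : 'I_2) : i = 0 \/ i = 1.
Proof. by case: i => [[|[|//]]] h; [left|right]; apply/val_inj. Qed.

Lemma mx2P A B : A 0 0 = B 0 0 -> A 0 1 = B 0 1 -> A 1 0 = B 1 0 ->
  A 1 1 = B 1 1 -> A = B.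
Proof.
move=> e00 e01 e10 e11; apply/matrixP => i j.
by case: (ord2P i) => ->; case: (ord2P j) => ->.
Qed.

Lemma det_mx2 A : \det A = A 0 0 * A 1 1 - A 0 1 * A 1 0.
Proof.
rewrite (expand_det_row _ 0) !big_ord_recl big_ord0 /cofactor !det_mx11 !mxE /=.
have -> : lift 0 (0 : 'I_1) = 1 :> 'I_2 by apply/val_inj.
have -> : lift 1 (0 : 'I_1) = 0 :> 'I_2 by apply/val_inj.
have -> : ord0 = 0 :> 'I_2 by apply/val_inj.
by rewrite /bump /= expr0 mul1r mulN1r addr0 mulrN.
Qed.

Lemma mulmx2E A B i j : (A * B) i j = A i 0 * B 0 j + A i 1 * B 1 j.
Proof.
rewrite -mulmxE mxE !big_ord_recl big_ord0 addr0.
have -> : ord0 = 0 :> 'I_2 by apply/val_inj.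
by have -> : lift ord0 ord0 = 1 :> 'I_2 by apply/val_inj.
Qed.

Lemma sqr_mx2E A (k : K) : A * A = k%:M ->
  [/\ A 0 0 ^+ 2 + A 0 1 * A 1 0 = k, A 0 1 * (A 0 0 + A 1 1) = 0,
      A 1 0 * (A 0 0 + A 1 1) = 0 & A 1 1 ^+ 2 + A 0 1 * A 1 0 = k].
Proof.
move=> h; have e i j := congr1 (fun M : 'M[K]_2 => M i j) h.
move: (e 0 0) (e 0 1) (e 1 0) (e 1 1); rewrite /= !mulmx2E !mxE /=.
rewrite mulr1n !mulr0n => e00 e01 e10 e11.
by split; [rewrite -e00 | rewrite -e01 | rewrite -e10 | rewrite -e11]; ring.
Qed.

End Matrix2.

Lemma invmx2E (K : comUnitRingType) (A : 'M[K]_2) : \det A = 1 ->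
  [/\ A^-1 0 0 = A 1 1, A^-1 0 1 = - A 0 1, A^-1 1 0 = - A 1 0 & A^-1 1 1 = A 0 0].
Proof.
move=> hd; have uA : A \in unitmx by rewrite unitmxE hd unitr1.
rewrite -[A^-1]/(invmx A) /invmx uA hd invr1 scale1r.
rewrite !mxE /cofactor !det_mx11 !mxE /=.
have -> : lift 0 (0 : 'I_1) = 1 :> 'I_2 by apply/val_inj.
have -> : lift 1 (0 : 'I_1) = 0 :> 'I_2 by apply/val_inj.
by rewrite /= expr0 expr1 -signr_odd !mul1r !mulN1r.
Qed.

Section Moebius.
Variable R : realType.
Local Notation C := R[i].
Implicit Types (A B s t : 'M[R]_2) (w : C).

Lemma mob_den_neq0 A w : \det A = 1 -> inH w -> (A 1 0)%:C * w + (A 1 1)%:C != 0.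
Proof.
case: w => x y; rewrite det_mx2 /inH /= => hd hy; rewrite -!complexr0; simpc.
apply/negP => /eqP [h1 h2]; have c0 : A 1 0 = 0 by nra.
move: h1 hd; rewrite c0 mul0r add0r => ->.
by rewrite !mulr0 subr0 => /eqP; rewrite eq_sym oner_eq0.
Qed.

Lemma mob_eqE A w u : \det A = 1 -> inH w ->
  mob A w = u <-> (A 0 0)%:C * w + (A 0 1)%:C = u * ((A 1 0)%:C * w + (A 1 1)%:C).
Proof.
move=> hd hw; have hn := mob_den_neq0 hd hw; rewrite /mob.
by split=> [<-|->]; rewrite ?divfK ?mulfK.
Qed.

Lemma mob_fixE A (x y : R) : \det A = 1 -> 0 < y ->
  mob A (x +i* y) = x +i* y <->
  A 1 1 - A 0 0 = - (2 * A 1 0 * x) /\ A 0 1 = - (A 1 0 * (x ^+ 2 + y ^+ 2)).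
Proof.
move=> hd hy; rewrite mob_eqE // -!complexr0; simpc; split.
  case=> h1 h2; have e1 : A 1 1 - A 0 0 = - (2 * A 1 0 * x) by nra.
  by split=> //; nra.
by case=> h1 h2; congr (_ +i* _); nra.
Qed.

Lemma mob_inH A w : \det A = 1 -> inH w -> inH (mob A w).
Proof.
case: w => x y hd hy; have := (mob_eqE _ hd hy).1 erefl.
case: (mob A _) => u v; rewrite /inH /= -!complexr0; simpc; case=> h1 h2.
move: hd hy; rewrite det_mx2 /inH /= => hd hy.
set p := A 1 0 * x + A 1 1 in h1 h2 *; set q := A 1 0 * y in h1 h2 *.
have e2 : v * p = A 0 0 * y - u * q by rewrite h2; ring.
have e1 : v * q = u * p - (A 0 0 * x + A 0 1) by rewrite h1; ring.
have key : v * (p ^+ 2 + q ^+ 2) = y.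
  transitivity (p * (v * p) + q * (v * q)); first ring.
  by rewrite e1 e2 -[y in RHS]mulr1 -hd /p /q; ring.
nra.
Qed.

Lemma mobM A B w : \det A = 1 -> \det B = 1 -> inH w ->
  mob (A * B) w = mob A (mob B w).
Proof.
move=> hA hB hw; have hu := mob_inH hB hw.
have eB := (mob_eqE _ hB hw).1 erefl; have eA := (mob_eqE _ hA hu).1 erefl.
set u := mob B w in eB eA hu *; set m := mob A u in eA *.
apply/(mob_eqE _ _ hw); first by rewrite detM hA hB mulr1.
rewrite !mulmx2E !rmorphD !rmorphM.
transitivity ((A 0 0)%:C * ((B 0 0)%:C * w + (B 0 1)%:C) +
              (A 0 1)%:C * ((B 1 0)%:C * w + (B 1 1)%:C)); first ring.
transitivity (m * ((A 1 0)%:C * ((B 0 0)%:C * w + (B 0 1)%:C) +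
              (A 1 1)%:C * ((B 1 0)%:C * w + (B 1 1)%:C))); last ring.
rewrite eB.
transitivity (((A 0 0)%:C * u + (A 0 1)%:C) * ((B 1 0)%:C * w + (B 1 1)%:C)); first ring.
by rewrite eA; ring.
Qed.

Lemma mobN A w : mob (- A) w = mob A w.
Proof. by rewrite /mob !mxE !rmorphN !mulNr -!opprD invrN mulrNN. Qed.

Lemma mob1 w : mob 1 w = w.
Proof. by rewrite /mob !mxE /= !rmorph1 !rmorph0 !mul1r !mul0r !addr0 add0r divr1. Qed.

Lemma unit_det1 A : \det A = 1 -> A \is a GRing.unit.
Proof. by move=> h; rewrite -[_ \is a _]/(A \in unitmx) unitmxE h unitr1. Qed.

Lemma detV1 A : \det A = 1 -> \det A^-1 = 1.
Proof. by move=> h; rewrite detV h invr1. Qed.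

Lemma mobK A w : \det A = 1 -> inH w -> mob A^-1 (mob A w) = w.
Proof. by move=> h hw; rewrite -mobM ?detV1 // mulVr ?unit_det1 // mob1. Qed.

Lemma mobKV A w : \det A = 1 -> inH w -> mob A (mob A^-1 w) = w.
Proof. by move=> h hw; rewrite -mobM ?detV1 // mulrV ?unit_det1 // mob1. Qed.

Lemma mobV_fix A w : \det A = 1 -> inH w -> mob A w = w -> mob A^-1 w = w.
Proof. by move=> h hw e; rewrite -{1}e mobK. Qed.

End Moebius.

Section EllipticInvolution.
Variable R : realType.
Local Notation C := R[i].
Implicit Types (A B D s t : 'M[R]_2) (w : C).

Lemma psl_eqP A B : reflect (psl_eq A B) ((A == B) || (A == - B)).
Proof. by apply: (iffP orP) => [[] /eqP ->|[] ->]; [left|right|left|right]. Qed.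

Lemma psl_eq_refl A : psl_eq A A.
Proof. by left. Qed.

Lemma psl_eq_sym A B : psl_eq A B -> psl_eq B A.
Proof. by case=> ->; [left|right; rewrite opprK]. Qed.

Lemma psl_eq_trans A B D : psl_eq A B -> psl_eq B D -> psl_eq A D.
Proof. by case=> ->; case=> ->; rewrite ?opprK; [left|right|right|left]. Qed.

Lemma psl_eq_mob A B w : psl_eq A B -> mob A w = mob B w.
Proof. by case=> ->; rewrite ?mobN. Qed.

Lemma psl_eq_inv A B : psl_eq A B -> psl_eq A^-1 B^-1.
Proof. by case=> ->; [left|right; rewrite invrN]. Qed.

Lemma psl_eq_sqr A B : psl_eq A B -> A * A = B * B.
Proof. by case=> ->; rewrite ?mulrNN. Qed.

Lemma sqrN1_inv s : s * s = -1 -> s^-1 = - s.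
Proof.
move=> h; have us : s \is a GRing.unit by apply/unitrP; exists (- s); rewrite mulrN mulNr h opprK.
by rewrite -[s^-1]mulr1 -[1]opprK -h mulrN mulKr.
Qed.

Lemma psl_eq1_sqr A : \det A = 1 -> psl_eq (A * A) 1 <-> psl_eq A^-1 A.
Proof.
move=> hd; have uA := unit_det1 hd.
split=> -[h|h]; [left|right|left|right].
- by rewrite -[LHS]mulr1 -h mulKr.
- exact: sqrN1_inv.
- by rewrite -{1}h mulVr.
- by rewrite -{1}(opprK A) -h mulNr mulVr.
Qed.

Lemma sqr1_psl_eq1 s : \det s = 1 -> s * s = 1 -> psl_eq s 1.
Proof.
rewrite det_mx2 => hd h; have [e1 e2 e3 e4] := sqr_mx2E (h : s * s = 1%:M); clear h.
have [hs|hs] := eqVneq (s 0 0 + s 1 1) 0.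
  have ed : s 1 1 = - s 0 0 by lra.
  by move: hd e1; rewrite ed => hd e1; nra.
have b0 : s 0 1 = 0 by move/eqP: e2; rewrite mulf_eq0 (negPf hs) orbF => /eqP.
have c0 : s 1 0 = 0 by move/eqP: e3; rewrite mulf_eq0 (negPf hs) orbF => /eqP.
move: e1 e4 hd; rewrite b0 c0 !mul0r !addr0 subr0 => e1 e4 hd.
have /eqP : (s 0 0 - 1) * (s 0 0 + 1) = 0 by nra.
rewrite mulf_eq0 => /orP [/eqP a1|/eqP a1]; [left|right];
  by apply: mx2P; rewrite !mxE /= ?oppr0 ?b0 ?c0 //; nra.
Qed.

Lemma order_two_sqrN1 s : \det s = 1 -> order_two s -> s * s = -1.
Proof. by move=> hd [hs1 [h|//]]; case: hs1; exact: sqr1_psl_eq1. Qed.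

Lemma sqrN1_trace s : s * s = -1 -> s 0 0 + s 1 1 = 0.
Proof.
move=> h; have h' : s * s = (-1)%:M by rewrite h; apply/matrixP=> i j; rewrite !mxE mulNrn.
have [e1 e2 _ _] := sqr_mx2E h'; apply/eqP/negPn/negP => hs.
have b0 : s 0 1 = 0 by move/eqP: e2; rewrite mulf_eq0 (negPf hs) orbF => /eqP.
by move: e1; rewrite b0 mul0r addr0; nra.
Qed.

Lemma sqrN1_lower_neq0 s : \det s = 1 -> s * s = -1 -> s 1 0 != 0.
Proof.
move=> hd /sqrN1_trace ht; move: hd; rewrite det_mx2 => hd.
by apply/eqP => c0; move: hd; rewrite c0 mulr0 subr0 (_ : s 1 1 = - s 0 0); [nra|lra].
Qed.

(* Conjugated by [w |-> x + y w], [A] becomes the rotation [[u, -v], [v, u]] *)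
(* with [u = A 0 0 - A 1 0 * x] and [v = A 1 0 * y].                          *)
Lemma mob_fix_entries A (x y : R) : \det A = 1 -> 0 < y ->
  mob A (x +i* y) = x +i* y ->
  [/\ A 1 1 - A 0 0 = - (2 * A 1 0 * x), A 0 1 = - (A 1 0 * (x ^+ 2 + y ^+ 2))
    & (A 0 0 - A 1 0 * x) ^+ 2 + (A 1 0 * y) ^+ 2 = 1].
Proof.
move=> hd hy /(mob_fixE _ hd hy) [e1 e2]; split=> //.
move: hd; rewrite det_mx2 => hd.
have ed : A 1 1 = A 0 0 - 2 * A 1 0 * x by lra.
by rewrite -hd ed e2; ring.
Qed.

Lemma sqrN1_fix_unique s w w' : \det s = 1 -> s * s = -1 ->
  inH w -> inH w' -> mob s w = w -> mob s w' = w' -> w = w'.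
Proof.
case: w => x y; case: w' => x' y' hs ss hy hy' f f'.
have cn := sqrN1_lower_neq0 hs ss; have tr := sqrN1_trace ss.
rewrite /inH /= in hy hy'.
have [e1 e2 _] := mob_fix_entries hs hy f; have [e1' e2' _] := mob_fix_entries hs hy' f'.
have ex : x = x' by apply: (mulfI cn); lra.
subst x'; have : s 1 0 * (x ^+ 2 + y ^+ 2) = s 1 0 * (x ^+ 2 + y' ^+ 2) by lra.
by move/(mulfI cn)/addrI => ey; congr (_ +i* _); nra.
Qed.

Lemma sqrN1_fix_exists s : \det s = 1 -> s * s = -1 -> exists2 w, inH w & mob s w = w.
Proof.
move=> hs ss; have cn := sqrN1_lower_neq0 hs ss; have tr := sqrN1_trace ss.
have hy : 0 < `|s 1 0|^-1 by rewrite invr_gt0 normr_gt0.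
(* the root in h of [c w^2 + (d - a) w - b], using [a + d = 0], [ad - bc = 1] *)
exists ((s 0 0 / s 1 0) +i* `|s 1 0|^-1) => //; apply/(mob_fixE _ hs hy).
rewrite exprVn real_normK ?num_real //.
move: hs; rewrite det_mx2 (_ : s 1 1 = - s 0 0); last by lra.
move=> hs; split; first by field.
have -> : s 0 1 = - (1 + s 0 0 ^+ 2) / s 1 0.
  by rewrite -[s 0 1](mulfK cn) (_ : s 0 1 * s 1 0 = - (1 + s 0 0 ^+ 2)); lra.
by field.
Qed.

Lemma sqrN1_fix_psl_eq s t w : inH w -> \det s = 1 -> \det t = 1 ->
  s * s = -1 -> t * t = -1 -> mob s w = w -> mob t w = w -> psl_eq t s.
Proof.
case: w => x y hy hs ht ss tt fs ft; rewrite /inH /= in hy.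
have [s1 s2 s3] := mob_fix_entries hs hy fs; have [t1 t2 t3] := mob_fix_entries ht hy ft.
have trs := sqrN1_trace ss; have trt := sqrN1_trace tt.
have as_ : s 0 0 = s 1 0 * x by lra.
have at_ : t 0 0 = t 1 0 * x by lra.
have ds : s 1 1 = - (s 1 0 * x) by lra.
have dt : t 1 1 = - (t 1 0 * x) by lra.
rewrite as_ in s3; rewrite at_ in t3.
have /eqP : y ^+ 2 * ((t 1 0 - s 1 0) * (t 1 0 + s 1 0)) = 0 by lra.
rewrite !mulf_eq0 (gt_eqF hy) /= => /orP [/eqP e|/eqP e]; [left|right].
  have ec : t 1 0 = s 1 0 by lra.
  by apply: mx2P; rewrite ?as_ ?at_ ?ds ?dt ?s2 ?t2 ec.
have ec : t 1 0 = - s 1 0 by lra.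
by apply: mx2P; rewrite !mxE ?as_ ?at_ ?ds ?dt ?s2 ?t2 ec; ring.
Qed.

Lemma mob_id_psl_eq1 A : \det A = 1 -> (forall w, inH w -> mob A w = w) -> psl_eq A 1.
Proof.
move=> hd hA; have y1 : (0 : R) < 1 by []; have y2 : (0 : R) < 2 by [].
have [e1 e2 _] := mob_fix_entries hd y1 (hA (0 +i* 1) y1).
have [_ e2' _] := mob_fix_entries hd y2 (hA (0 +i* 2) y2).
have c0 : A 1 0 = 0 by move: e2 e2'; rewrite !expr0n /= => ->; lra.
have b0 : A 0 1 = 0 by rewrite e2 c0 mul0r oppr0.
have ea : A 1 1 = A 0 0 by move: e1; rewrite !mulr0 oppr0 => /eqP; rewrite subr_eq0 => /eqP.
move: hd; rewrite det_mx2 b0 c0 ea mulr0 subr0 => hd.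
have /eqP : (A 0 0 - 1) * (A 0 0 + 1) = 0 by nra.
rewrite mulf_eq0 => /orP [/eqP a1|/eqP a1]; [left|right];
  by apply: mx2P; rewrite !mxE /= ?b0 ?c0 ?ea ?oppr0 //; lra.
Qed.

End EllipticInvolution.

Lemma odd_card_involution (T : finType) (f : T -> T) : involutive f ->
  odd #|T| = odd #|[set x | f x == x]|.
Proof.
move=> fK; set F := [set x | f x == x].
set L := [set x | (enum_rank x < enum_rank (f x))%N].
set G := [set x | (enum_rank (f x) < enum_rank x)%N].
have eC : ~: F = L :|: G.
  by apply/setP => x; rewrite !inE -(inj_eq enum_rank_inj) neq_ltn orbC.
have dLG : L :&: G = set0.
  apply/setP => y; rewrite !inE; apply/negP => /andP [h1 h2].
  by move: (ltn_trans h1 h2); rewrite ltnn.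
have eG : f @: L = G.
  apply/setP => u; rewrite inE; apply/imsetP/idP => [[v]|hu].
    by rewrite inE => hv ->; rewrite fK.
  by exists (f u); rewrite ?inE fK.
have := cardsC F; rewrite eC cardsU dLG cards0 subn0 -eG card_imset; last exact: inv_inj.
by move=> <-; rewrite oddD addnn odd_double addbF.
Qed.

Lemma List_In_nth (T : Type) (x0 x : T) (s : seq T) :
  List.In x s -> exists2 i, (i < size s)%N & nth x0 s i = x.
Proof.
elim: s => [//|y s IH] /= [->|/IH [i hi e]]; first by exists 0%N.
by exists i.+1.
Qed.

Lemma nth_List_In (T : Type) (x0 : T) (s : seq T) i :
  (i < size s)%N -> List.In (nth x0 s i) s.
Proof. by elim: s i => [//|y s IH] [|i] /= hi; [left|right; exact: IH]. Qed.

Definition separated (T : Type) (x0 : T) (E : T -> T -> Prop) (s : seq T) :=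
  forall i j, (i < size s)%N -> (j < size s)%N -> E (nth x0 s i) (nth x0 s j) -> i = j.

Lemma separated_cons (T : Type) (x0 x : T) (E : T -> T -> Prop) (s : seq T) :
  (forall y, E y x -> E x y) -> separated x0 E s ->
  (forall y, List.In y s -> ~ E x y) -> separated x0 E (x :: s).
Proof.
move=> Esym sep uncov [|i] [|j] //= hi hj e.
- by case: (uncov _ (nth_List_In x0 hj) e).
- by case: (uncov _ (nth_List_In x0 hi) (Esym _ e)).
- by congr S; apply: sep.
Qed.

(* Greedy extension: a separated list that does not cover P can be enlarged,  *)
(* and the size bound [b] stops this after at most [b] steps.                 *)
Lemma exists_maximal_separated (T : Type) (x0 : T) (P : T -> Prop)
    (E : T -> T -> Prop) (b : nat) :
  (forall x y, E x y -> E y x) ->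
  (forall s, (forall x, List.In x s -> P x) -> separated x0 E s -> (size s <= b)%N) ->
  exists s, [/\ forall x, List.In x s -> P x,
                forall x, P x -> exists2 y, List.In y s & E x y
              & separated x0 E s].
Proof.
move=> Esym bound.
suff grow k s : (forall x, List.In x s -> P x) -> separated x0 E s ->
    (b - size s <= k)%N -> exists s', [/\ forall x, List.In x s' -> P x,
      forall x, P x -> exists2 y, List.In y s' & E x y & separated x0 E s'].
  by apply: (grow b [::]); rewrite ?subn0.
elim: k s => [|k IH] s s_P s_sep hk.
all: have [[x [Px uncov]]|covered] :=
  classic (exists x, P x /\ ~ exists2 y, List.In y s & E x y); last first.
1,3: by exists s; split=> // x Px; apply: NNPP => h; apply: covered; exists x.
all: have s'_P : forall y, List.In y (x :: s) -> P y by move=> y /= [<-|/s_P].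
all: have s'_sep : separated x0 E (x :: s)
  by apply: separated_cons => [y /Esym|//|y hy e] //; apply: uncov; exists y.
  by have := bound _ s'_P s'_sep; rewrite /= ltnNge -subn_eq0 -leqn0 hk.
by apply: (IH _ s'_P s'_sep); rewrite /= subnS -subn1 leq_subLR add1n.
Qed.

Lemma separated_size_le_card (T : Type) (x0 : T) (P : T -> Prop) (E : T -> T -> Prop)
    (K : finType) (key : T -> K) (s : seq T) :
  (forall x y, P x -> P y -> key x = key y -> E x y) ->
  (forall x, List.In x s -> P x) -> separated x0 E s -> (size s <= #|K|)%N.
Proof.
move=> keyE s_P sep; pose f (i : 'I_(size s)) := key (nth x0 s i).
have f_inj : injective f.
  move=> i j e; apply/val_inj/sep; rewrite ?ltn_ord //.
  by apply: keyE e; apply/s_P/nth_List_In.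
by rewrite -[size s]card_ord; apply: leq_card f_inj.
Qed.

Section StabilizerParity.
Variables (R : realType) (Gt : 'M[R]_2 -> Prop) (z : R[i]) (l : seq 'M[R]_2).
Hypothesis G_SL2 : forall A, Gt A -> SL2 A.
Hypothesis G1 : Gt 1.
Hypothesis GV : forall A, Gt A -> Gt A^-1.
Hypothesis hz : inH z.
Hypothesis l_stab : forall A, List.In A l -> Gt A /\ mob A z = z.
Hypothesis l_cover : forall A, Gt A -> mob A z = z -> exists2 B, List.In B l & psl_eq A B.
Hypothesis l_sep : separated 0 (@psl_eq R) l.

Local Notation n := (size l).
Let L (i : 'I_n) := nth 0 l i.

Let L_stab i : Gt (L i) /\ mob (L i) z = z.
Proof. exact/l_stab/nth_List_In. Qed.

Let L_det i : \det (L i) = 1.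
Proof. by apply: G_SL2; case: (L_stab i). Qed.

Let L_inj i j : psl_eq (L i) (L j) -> i = j.
Proof. by move=> h; apply: val_inj; exact: l_sep (ltn_ord i) (ltn_ord j) h. Qed.

Let L_cover A : Gt A -> mob A z = z -> exists j, psl_eq A (L j).
Proof.
move=> GA FA; have [B /(List_In_nth 0) [j hj <-] e] := l_cover GA FA.
by exists (Ordinal hj).
Qed.

(* Inversion in PSL_2(R), read on the indices of the enumeration [l]. *)
Let stab_inv i := odflt i [pick j | ((L i)^-1 == L j) || ((L i)^-1 == - L j)].

Let stab_invP i : psl_eq (L i)^-1 (L (stab_inv i)).
Proof.
rewrite /stab_inv; case: pickP => [j /psl_eqP //|none].
have [G_i F_i] := L_stab i.
have [j hj] := L_cover (GV G_i) (mobV_fix (L_det i) hz F_i).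
by move: (none j) => /psl_eqP.
Qed.

Let stab_inv_involutive : involutive stab_inv.
Proof.
move=> i; apply: L_inj; have := psl_eq_inv (stab_invP i); rewrite invrK => e.
exact: psl_eq_sym (psl_eq_trans e (stab_invP (stab_inv i))).
Qed.

Let stab_inv_fixE i : stab_inv i = i <-> psl_eq (L i * L i) 1.
Proof.
rewrite psl_eq1_sqr //; split=> e; first by rewrite -{2}e; exact: stab_invP.
exact: L_inj (psl_eq_trans (psl_eq_sym (stab_invP i)) e).
Qed.

Let stab_inv_fixed_odd :
  odd #|[set i | stab_inv i == i]| <-> ~ exists s, [/\ Gt s, mob s z = z & order_two s].
Proof.
have [i1 hi1] := L_cover G1 (mob1 z).
have fixedE i : stab_inv i == i -> i = i1 \/ order_two (L i).
  move/eqP/stab_inv_fixE => h; have [e|ne] := classic (psl_eq (L i) 1).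
    by left; apply/L_inj/(psl_eq_trans e).
  by right.
have fixed_i1 : stab_inv i1 == i1.
  by apply/eqP/stab_inv_fixE; rewrite -(psl_eq_sqr hi1) mulr1; exact: psl_eq_refl.
have [[s [Gs Fs Os]]|none] := classic (exists s, [/\ Gt s, mob s z = z & order_two s]).
  have ss := order_two_sqrN1 (G_SL2 Gs) Os.
  have [js hjs] := L_cover Gs Fs.
  have i1_js : i1 != js.
    apply/eqP => e; case: Os => Os _; apply/Os/(psl_eq_trans hjs).
    by rewrite -e; exact: psl_eq_sym.
  suff -> : [set i | stab_inv i == i] = [set i1; js].
    by rewrite cards2 i1_js; split=> // h; case: h; exists s.
  apply/setP => i; rewrite !inE; apply/idP/idP.
    case/fixedE => [->|Oi]; first by rewrite eqxx.
    have Li := order_two_sqrN1 (L_det i) Oi; have [_ Fi] := L_stab i.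
    have := sqrN1_fix_psl_eq hz (G_SL2 Gs) (L_det i) ss Li Fs Fi.
    by move=> e; rewrite (L_inj (psl_eq_trans e hjs)) eqxx orbT.
  case/orP => /eqP -> //; apply/eqP/stab_inv_fixE.
  by rewrite -(psl_eq_sqr hjs) ss; right.
suff -> : [set i | stab_inv i == i] = [set i1] by rewrite cards1.
apply/setP => i; rewrite !inE; apply/idP/idP => [|/eqP -> //].
case/fixedE => [->|Oi]; first exact: eqxx.
by case: none; exists (L i); have [? ?] := L_stab i.
Qed.

Lemma stab_order_even : ~~ odd n <-> exists s, [/\ Gt s, mob s z = z & order_two s].
Proof.
rewrite -(card_ord n) (odd_card_involution stab_inv_involutive).
split=> [/negP odd_fix|ex_s]; last by apply/negP => /stab_inv_fixed_odd.
by apply: NNPP => /stab_inv_fixed_odd.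
Qed.

End StabilizerParity.

Section StabilizerBound.
Variable R : realType.

Definition stab_bound (x y : R) := 2 + (x / y) ^+ 2 + y^-1 + (x ^+ 2 + y ^+ 2) / y.

Lemma fix_entries_bound (a b c d x y : R) : 0 < y ->
  d - a = - (2 * c * x) -> b = - (c * (x ^+ 2 + y ^+ 2)) ->
  (a - c * x) ^+ 2 + (c * y) ^+ 2 = 1 ->
  [/\ `|a| <= stab_bound x y, `|b| <= stab_bound x y,
      `|c| <= stab_bound x y & `|d| <= stab_bound x y].
Proof.
move=> hy e1 e2 e3; have y0 : y != 0 by rewrite gt_eqF.
set r := y^-1; have hr : 0 < r by rewrite invr_gt0.
set u := a - c * x in e3; set v := c * y in e3.
have /andP [hu1 hu2] : -1 <= u <= 1 by apply/andP; split; nra.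
have /andP [hv1 hv2] : -1 <= v <= 1 by apply/andP; split; nra.
set k := x / y; set s := (x ^+ 2 + y ^+ 2) / y.
have ec : c = v * r by rewrite /v /r; field.
have ea : a = u + v * k by rewrite /u /v /k; field.
have vk : v * k = c * x by rewrite /v /k; field.
have ed : d = u - v * k by lra.
have hs : 0 <= s by rewrite /s divr_ge0 // ?ltW //; nra.
have eb : b = - (v * s) by rewrite e2 /v /s; field.
have /andP [hvk1 hvk2] : -(1 + k ^+ 2) <= v * k <= 1 + k ^+ 2 by apply/andP; split; nra.
rewrite /stab_bound -/k -/r -/s.
by split; rewrite ler_norml; apply/andP; split; rewrite ?ea ?eb ?ec ?ed; nra.
Qed.

Lemma stab_entry_bound (A : 'M[R]_2) (x y : R) : \det A = 1 -> 0 < y ->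
  mob A (x +i* y) = x +i* y -> forall i j, `|A i j| <= stab_bound x y.
Proof.
move=> hd hy /(mob_fix_entries hd hy) [e1 e2 e3].
have [b00 b01 b10 b11] := fix_entries_bound hy e1 e2 e3.
by move=> i j; case: (ord2P i) => ->; case: (ord2P j) => ->.
Qed.

End StabilizerBound.

Section DiscreteGroup.
Variables (R : realType) (Gt : 'M[R]_2 -> Prop).
Hypotheses (hG : psl_subgroup Gt) (hD : psl_discrete Gt).

Lemma inv_entry_bound (B : 'M[R]_2) (M : R) : \det B = 1 ->
  (forall i j, `|B i j| <= M) -> forall i j, `|B^-1 i j| <= M.
Proof.
move=> dB bB i j; have [i00 i01 i10 i11] := invmx2E dB.
by case: (ord2P i) => ->; case: (ord2P j) => ->; rewrite ?i00 ?i01 ?i10 ?i11 ?normrN.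
Qed.

Lemma truncn_close (p q M : R) (N : nat) : 0 <= p + M -> 0 <= q + M ->
  truncn (N%:R * (p + M)) = truncn (N%:R * (q + M)) -> N%:R * `|p - q| < 1.
Proof.
move=> hp hq e.
have /andP [x1 x2] := truncn_itv (mulr_ge0 (ler0n _ N) hp).
have /andP [y1 y2] := truncn_itv (mulr_ge0 (ler0n _ N) hq).
rewrite e in x1 x2; rewrite -natr1 in x2 y2.
have -> : N%:R * `|p - q| = `|N%:R * (p + M) - N%:R * (q + M)|.
  by rewrite -mulrBr normrM normr_nat; congr (_ * `|_|); ring.
by rewrite ltr_norml; apply/andP; split; lra.
Qed.

Lemma close_entries_psl_eq (M e : R) (N : nat) (A B : 'M[R]_2) :
  Gt A -> Gt B -> 2 * M < N%:R * e -> (forall i j, `|B i j| <= M) ->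
  (forall i j, N%:R * `|A i j - B i j| < 1) ->
  (forall D, Gt D -> mx_close D 1 e \/ mx_close D (- 1) e -> psl_eq D 1) ->
  psl_eq A B.
Proof.
move=> GA GB hN bB AB near1; have [G_SL2 _ _ GM GV] := hG.
have dB := G_SL2 _ GB; have uB := unit_det1 dB; have bBV := inv_entry_bound dB bB.
have M0 : 0 <= M := le_trans (normr_ge0 _) (bB 0 0).
have N0 : 0 < N%:R :> R.
  by rewrite ltr0n lt0n; apply/eqP => N_0; move: hN; rewrite N_0 mul0r; lra.
suff close : mx_close (A * B^-1) 1 e.
  have [e1|e1] := near1 _ (GM _ _ GA (GV _ GB)) (or_introl close);
    [left|right]; by rewrite -[A](divrK uB) e1 ?mul1r ?mulN1r.
move=> i j; have -> : (A / B) i j - (1 : 'M[R]_2) i j = (A / B - 1) i j by rewrite !mxE.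
rewrite -[X in A / B - X](mulrV uB) -mulrBl mulmx2E !mxE.
rewrite (le_lt_trans (ler_normD _ _)) // !normrM -(ltr_pM2l N0).
have := AB i 0; have := AB i 1; have := bBV 0 j; have := bBV 1 j.
have := normr_ge0 (A i 0 - B i 0); have := normr_ge0 (A i 1 - B i 1).
have := normr_ge0 (B^-1 0 j); have := normr_ge0 (B^-1 1 j); nra.
Qed.

(* Round the entries to the grid [1/N Z]: equal keys put [A B^-1] within [e] *)
(* of [1], where [e] isolates [1] in [Gt].                                   *)
Lemma discrete_bounded_key (M : R) :
  exists K (key : 'M[R]_2 -> {ffun 'I_2 * 'I_2 -> 'I_K}),
    forall A B, Gt A -> Gt B ->
      (forall i j, `|A i j| <= M) -> (forall i j, `|B i j| <= M) ->
      key A = key B -> psl_eq A B.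
Proof.
have [_ G1 _ _ _] := hG; have [e e0 near1] := hD G1.
pose N := (truncn (2 * M / e)).+1.
have hN : 2 * M < N%:R * e by rewrite -ltr_pdivrMr // truncnS_gt.
pose K := truncn (N%:R * (2 * M)).
pose grid (A : 'M[R]_2) i j := truncn (N%:R * (A i j + M)).
have grid_lt (A : 'M[R]_2) i j : `|A i j| <= M -> (grid A i j < K.+1)%N.
  rewrite ler_norml => /andP [_ h]; rewrite ltnS; apply: le_truncn.
  by rewrite ler_pM2l ?ltr0n //; lra.
exists K.+1, (fun A => [ffun p => inord (grid A p.1 p.2)]).
move=> A B GA GB bA bB /ffunP eAB.
apply: (close_entries_psl_eq GA GB hN bB _ near1) => i j.
have := congr1 val (eAB (i, j)); rewrite !ffunE /= !inordK ?grid_lt //.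
have := bA i j; have := bB i j; rewrite !ler_norml => /andP [hB _] /andP [hA _].
by apply: truncn_close; lra.
Qed.

End DiscreteGroup.

Lemma stab_order_exists (R : realType) (Gt : 'M[R]_2 -> Prop) (z : R[i]) :
  psl_subgroup Gt -> psl_discrete Gt -> inH z -> exists n, stab_order Gt z n.
Proof.
case: z => x y hG hD hy; have [G_SL2 _ _ _ _] := hG.
pose P A := Gt A /\ mob A (x +i* y) = x +i* y.
have bounded A : P A -> forall i j, `|A i j| <= stab_bound x y.
  by case=> GA FA; exact: stab_entry_bound (G_SL2 _ GA) hy FA.
have [K [key keyE]] := discrete_bounded_key hG hD (stab_bound x y).
have [|l [l_P l_cover l_sep]] := exists_maximal_separated (x0 := 0) (@psl_eq_sym R)
    (b := #|{: {ffun 'I_2 * 'I_2 -> 'I_K}}|) (P := P).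
  move=> s; apply: separated_size_le_card => A B PA PB.
  by apply: keyE; [case: PA | case: PB | exact: bounded | exact: bounded].
by exists (size l), l; split=> // A GA FA; apply: l_cover.
Qed.

Section EllipticEven.
Variables (R : realType) (Gt : 'M[R]_2 -> Prop).
Hypotheses (hG : psl_subgroup Gt) (hD : psl_discrete Gt).

Lemma stab_order_evenP (z : R[i]) n : inH z -> stab_order Gt z n ->
  ~~ odd n <-> exists s, [/\ Gt s, mob s z = z & order_two s].
Proof.
move=> hz [l [<- l_stab l_cover l_sep]]; have [G_SL2 G1 _ _ GV] := hG.
exact: stab_order_even.
Qed.

Lemma elliptic_evenP (z : R[i]) :
  elliptic_even Gt z <-> inH z /\ exists s, [/\ Gt s, mob s z = z & order_two s].
Proof.
split=> [[hz [n [zn n_even]]]|[hz s_z]]; first by split; last exact/(stab_order_evenP hz zn).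
have [n zn] := stab_order_exists hG hD hz.
by split=> //; exists n; split; last exact/(stab_order_evenP hz zn).
Qed.

End EllipticEven.

Section AdmissibleCentralizer.
Variables (R : realType) (Gt : 'M[R]_2 -> Prop) (c : R[i] -> R[i]) (g : 'M[R]_2).
Hypothesis G_SL2 : forall A, Gt A -> SL2 A.
Hypothesis c_H : forall w, inH w -> inH (c w).
Hypothesis c_invol : forall w, inH w -> c (c w) = w.
Hypothesis G_conj : forall A, Gt A ->
  exists2 B, Gt B & forall w, inH w -> mob B w = c (mob A (c w)).
Hypothesis Gg : Gt g.

Lemma conj_sqrN1 s B : \det s = 1 -> \det B = 1 -> s * s = -1 ->
  (forall w, inH w -> mob B w = c (mob s (c w))) -> B * B = -1.
Proof.
move=> ds dB ss Bc.
have dBB : \det (B * B) = 1 by rewrite detM dB mulr1.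
have [BB1|//] : psl_eq (B * B) 1.
  apply: mob_id_psl_eq1 => // w hw.
  have hcw := c_H hw; have hBw := mob_inH dB hw; have hscw := mob_inH ds hcw.
  by rewrite mobM // Bc // Bc // c_invol // -mobM // ss mobN mob1 c_invol.
have s1 : psl_eq s 1.
  apply: mob_id_psl_eq1 => // w hw; have hsw := mob_inH ds hw.
  have := Bc _ (c_H hw); rewrite (psl_eq_mob _ (sqr1_psl_eq1 dB BB1)) mob1 c_invol //.
  by move/(congr1 c); rewrite !c_invol // => /esym.
have : (-1 : 'M[R]_2) = 1 by rewrite -ss (psl_eq_sqr s1) mulr1.
move/matrixP/(_ 0 0); rewrite !mxE /= => /eqP.
by rewrite -subr_eq0 -opprD oppr_eq0 -natrD pnatr_eq0.
Qed.

Lemma Zgamma_of_fixed_involution s z : Gt s -> s * s = -1 ->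
  on_Cgamma c g z -> mob s z = z -> inZgamma Gt c g s.
Proof.
move=> Gs ss [hz gz] sz; have ds := G_SL2 Gs; have dg := G_SL2 Gg.
have [B GB Bc] := G_conj Gs; have dB := G_SL2 GB.
pose K := g * s * g^-1.
have dK : \det K = 1 by rewrite /K !detM dg ds detV1 // !mul1r.
have KK : K * K = -1.
  by rewrite /K !mulrA divrK ?unit_det1 // -(mulrA g s s) ss mulrN1 mulNr divrr ?unit_det1.
have gzH := mob_inH dg hz.
have Kgz : mob K (mob g z) = mob g z.
  by rewrite /K !mobM ?detM ?dg ?ds ?detV1 ?mulr1 // mobK // sz.
have Bgz : mob B (mob g z) = mob g z by rewrite gz Bc ?c_invol ?sz //; exact: c_H.
have BK := sqrN1_fix_psl_eq gzH dK dB KK (conj_sqrN1 ds dB ss Bc) Kgz Bgz.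
split=> // w hw; have hsw := mob_inH (detV1 ds) hw; have hgsw := mob_inH dg hsw.
rewrite -Bc // (psl_eq_mob _ BK) /K mobM ?detM ?dg ?ds ?mulr1 ?detV1 //.
by rewrite mobK // mobM // mobKV.
Qed.

Lemma on_Cgamma_of_fixed_involution s w : inZgamma Gt c g s -> s * s = -1 ->
  inH w -> mob s w = w -> on_Cgamma c g w.
Proof.
move=> [Gs Zs] ss hw sw; have ds := G_SL2 Gs; have dg := G_SL2 Gg.
set v := c (mob g w); have hv : inH v := c_H (mob_inH dg hw).
have sv : mob s v = v.
  have hsv := mob_inH ds hv.
  by have := Zs _ hw; rewrite mobV_fix // -/v => /(congr1 c); rewrite c_invol.
split=> //; rewrite -[in RHS](sqrN1_fix_unique ds ss hv hw sv sw) /v c_invol //.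
exact: mob_inH.
Qed.

End AdmissibleCentralizer.

Unset Implicit Arguments.

Theorem lemma3p7 (R : realType) (Gt : 'M[R]_2 -> Prop) (c : R[i] -> R[i])
    (g : 'M[R]_2) :
  real_fuchsian Gt c -> admissible Gt c g ->
  (forall z : R[i], elliptic_even Gt z -> on_Cgamma c g z ->
     exists s : 'M[R]_2,
       [/\ inZgamma Gt c g s, order_two s, mob s z = z &
           forall t, inZgamma Gt c g t -> order_two t -> mob t z = z ->
             psl_eq t s]) /\
  (forall s : 'M[R]_2, inZgamma Gt c g s -> order_two s ->
     exists z : R[i],
       [/\ elliptic_even Gt z, on_Cgamma c g z, mob s z = z &
           forall w, elliptic_even Gt w -> on_Cgamma c g w -> mob s w = w ->
             w = z]).
Proof.
move=> [hG hD [c_H c_invol _] [conjG _] _] [Gg _]; have [G_SL2 _ _ _ _] := hG.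
have involution s : Gt s -> order_two s -> \det s = 1 /\ s * s = -1.
  by move=> Gs Os; have ds := G_SL2 _ Gs; split; last exact: order_two_sqrN1.
split=> [z /(elliptic_evenP hG hD) [hz [s [Gs sz Os]]] Cz | s Zs Os].
  have [ds ss] := involution s Gs Os.
  exists s; split=> // [|t [Gt_t _] Ot tz].
    exact: (Zgamma_of_fixed_involution G_SL2 c_H c_invol conjG Gg Gs ss Cz sz).
  have [dt tt] := involution t Gt_t Ot.
  exact: sqrN1_fix_psl_eq hz ds dt ss tt sz tz.
have [ds ss] := involution s Zs.1 Os.
have [w hw sw] := sqrN1_fix_exists ds ss.
exists w; split=> // [||w' [hw' _] _ sw'].
- by apply/(elliptic_evenP hG hD); split=> //; exists s; case: Zs.
- exact: (on_Cgamma_of_fixed_involution G_SL2 c_H c_invol Gg Zs ss hw sw).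
- exact: sqrN1_fix_unique ds ss hw' hw sw' sw.
Qed.
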